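(* Let $H\ge2$ be fixed and assume the ranking mechanism is consistent. (i) If $K_n\xrightarrow{w}e$, then $\mathbb E(F_{n;jps}(t))\to F(t)$ as $n\to\infty$ for every continuity point $t$ of $F$. (ii) Conversely, if for every population CDF $F$ (with any consistent ranking mechanism) one has $\mathbb E(F_{n;jps}(t))\to F(t)$ as $n\to\infty$ at every continuity point $t$ of $F$, then $K_n\xrightarrow{w}e$. Thus estimators of the form $F_{n;jps}$ are asymptotically unbiased if and only if $K_n\xrightarrow{w}e$.
   Context: Setting (judgment post stratification, JPS). Fix an integer set size $H\ge 2$ and a sample size $n\ge 1$. A JPS sample is a collection of $n$ i.i.d. pairs $(X_1,R_1),\dots,(X_n,R_n)$, where $R_i\in\{1,\dots,H\}$ with $P(R_i=r)=1/H$ for each $r$, and conditionally on $R_i=r$ the real random variable $X_i$ has CDF $F_{[r]}$. Let $F$ be the population CDF. The ranking mechanism is called consistent if $F(t)=\frac1H\sum_{r=1}^H F_{[r]}(t)$ for all $t\in\mathbb R$. Define $I_{ir}=\mathbb I(R_i=r)$, $N_r=\sum_{i=1}^n I_{ir}$, $d_n=\sum_{r=1}^H\mathbb I(N_r>0)$, and $W_r=\mathbb I(N_r>0)/d_n$. Given a sequence of CDFs $(K_n)_{n\ge1}$ on $\mathbb R$, define $F_{n;[r]}(t)=\frac1{N_r}\sum_{i=1}^n K_n(t-X_i)I_{ir}$ if $N_r>0$ and $F_{n;[r]}(t)=0$ otherwise, and $F_{n;jps}(t)=\sum_{r=1}^H W_rF_{n;[r]}(t)$. Let $e(t)=\mathbb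 I(t\ge0)$. For CDFs $G_n,G$, $G_n\xrightarrow{w}G$ means $G_n(t)\to G(t)$ as $n\to\infty$ for every continuity point $t$ of $G$. *)

From HB Require Import structures.
From mathcomp Require Import all_boot all_order all_algebra.
From mathcomp Require Import all_classical all_reals all_analysis.
Set Implicit Arguments. Unset Strict Implicit. Unset Printing Implicit Defensive.
Import Order.TTheory GRing.Theory Num.Theory.
Import numFieldNormedType.Exports.
Local Open Scope classical_set_scope.
Local Open Scope ring_scope.

Definition isCDF (R : realType) (G : R -> R) : Prop :=
  [/\ (forall x y : R, x <= y -> G x <= G y),
      (forall x : R, G y @[y --> x^'+] --> G x),
      G x @[x --> -oo] --> (0 : R) &
      G x @[x --> +oo] --> (1 : R)].

Definition estep (R : realType) (t : R) : R := if 0 <= t then 1 else 0.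

Definition weak_conv (R : realType) (G : nat -> R -> R) (G0 : R -> R) : Prop :=
  forall t : R, {for t, continuous G0} -> G n t @[n --> \oo] --> G0 t.

(* A JPS sample of size n with set size H on the probability space (T,P):
   pairs (X i, Rk i), i < n, which are mutually independent and identically
   distributed with P(R_i = r, X_i <= x) = F_[r](x) / H (so that P(R_i = r) = 1/H
   and, given R_i = r, X_i has CDF F_[r]). Independence is the product rule
   for all events {X_i \in B_i, R_i \in S_i} (B_i Borel, S_i any set of ranks),
   which form a pi-system generating sigma(X_i, R_i). *)
Definition JPS_sample (R : realType) (d : measure_display) (T : measurableType d)
  (P : probability T R) (H n : nat) (Fr : 'I_H -> R -> R)
  (X : 'I_n -> T -> R) (Rk : 'I_n -> T -> 'I_H) : Prop :=
  [/\ (forall i, measurable_fun setT (X i)),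
      (forall i (r : 'I_H), measurable [set w | Rk i w = r]),
      (forall i (r : 'I_H) (x : R),
          P ([set w | Rk i w = r] `&` [set w | X i w <= x])
          = ((H%:R)^-1 * Fr r x)%:E) &
      (forall (B : 'I_n -> set R) (S : 'I_n -> set 'I_H),
          (forall i, measurable (B i)) ->
          P (\bigcap_(i in [set: 'I_n]) [set w | B i (X i w) /\ S i (Rk i w)])
          = (\prod_(i < n) P [set w | B i (X i w) /\ S i (Rk i w)])%E)].

Definition Ncount (T : Type) (H n : nat) (Rk : 'I_n -> T -> 'I_H) (w : T) (r : 'I_H) : nat :=
  \sum_(i < n) (Rk i w == r).

Definition dcount (T : Type) (H n : nat) (Rk : 'I_n -> T -> 'I_H) (w : T) : nat :=
  \sum_(r < H) (0 < Ncount Rk w r)%N.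

Definition Wjps (R : realType) (T : Type) (H n : nat) (Rk : 'I_n -> T -> 'I_H)
  (w : T) (r : 'I_H) : R :=
  if (0 < Ncount Rk w r)%N then ((dcount Rk w)%:R)^-1 else 0.

Definition Fstratum (R : realType) (T : Type) (H n : nat) (Kn : R -> R)
  (X : 'I_n -> T -> R) (Rk : 'I_n -> T -> 'I_H) (r : 'I_H) (t : R) (w : T) : R :=
  if (0 < Ncount Rk w r)%N then
    ((Ncount Rk w r)%:R)^-1 *
      \sum_(i < n) (Kn (t - X i w) * (Rk i w == r)%:R)
  else 0.

Definition Fjps (R : realType) (T : Type) (H n : nat) (Kn : R -> R)
  (X : 'I_n -> T -> R) (Rk : 'I_n -> T -> 'I_H) (t : R) (w : T) : R :=
  \sum_(r < H) Wjps R Rk w r * Fstratum Kn X Rk r t w.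

Definition jps_asymptotically_unbiased (R : realType) (H : nat) (K : nat -> R -> R) : Prop :=
  forall (F : R -> R) (Fr : 'I_H -> R -> R),
    isCDF F -> (forall r, isCDF (Fr r)) ->
    (forall t : R, F t = (H%:R)^-1 * \sum_(r < H) Fr r t) ->
    forall (d : nat -> measure_display) (T : forall n, measurableType (d n))
           (P : forall n, probability (T n) R)
           (X : forall n, 'I_n -> T n -> R) (Rk : forall n, 'I_n -> T n -> 'I_H),
      (forall n, JPS_sample (P n) Fr (X n) (Rk n)) ->
      forall t : R, {for t, continuous F} ->
        ('E_(P n)[Fjps (K n) (X n) (Rk n) t])%E @[n --> \oo] --> (F t)%:E.

(* Write F_{n;jps}(t) as sum_i c_i K_n(t - X_i), where the weights c_i = W_{R_i} / N_{R_i}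
   depend on the ranks only and sum to 1.  For the step kernel the estimator is exactly
   unbiased: summed over rank profiles every stratum carries the same total weight (swapping
   two rank labels permutes the profiles), so averaging F_[R_i](s) returns F(s).  For a
   general kernel, K_n(del) 1(x <= t - del) <= K_n(t - x) <= 1(x <= t + del) + K_n(-del), so
   E F_{n;jps}(t) lies between K_n(del) F(t - del) and F(t + del) + K_n(-del), and K_n -->w e
   squeezes it to F(t) at continuity points.  Conversely, for F = e, X_i = 0 and uniformly
   random ranks, F_{n;jps}(t) = K_n(t) exactly, so unbiasedness forces K_n(t) --> e(t). *)

From HB Require Import structures.
From mathcomp Require Import all_boot all_order all_algebra.
From mathcomp Require Import all_classical all_reals all_analysis.
From mathcomp Require Import perm ring lra.
Import Order.TTheory GRing.Theory Num.Theory.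
Import numFieldNormedType.Exports.
Local Open Scope classical_set_scope.
Local Open Scope ring_scope.
Set Implicit Arguments. Unset Strict Implicit. Unset Printing Implicit Defensive.

Section jps_mean.
Variables (R : numFieldType) (H n : nat).
Implicit Types (f : {ffun 'I_n -> 'I_H}) (phi : 'I_n -> R) (r : 'I_H).

Definition stratum_size f r : nat := \sum_(i < n) (f i == r).
Definition nstrata f : nat := \sum_(r < H) (0 < stratum_size f r)%N.
Definition stratum_weight f r : R :=
  if (0 < stratum_size f r)%N then (nstrata f)%:R^-1 else 0.
Definition stratum_mean f phi r : R :=
  if (0 < stratum_size f r)%N then
    (stratum_size f r)%:R^-1 * \sum_(i < n) phi i * (f i == r)%:R
  else 0.
Definition jps_mean f phi : R := \sum_(r < H) stratum_weight f r * stratum_mean f phi r.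
Definition unit_weight f i : R := stratum_weight f (f i) / (stratum_size f (f i))%:R.

Lemma stratum_weight_ge0 f r : 0 <= stratum_weight f r.
Proof. by rewrite /stratum_weight; case: ifP. Qed.

Lemma unit_weight_ge0 f i : 0 <= unit_weight f i.
Proof. by rewrite /unit_weight mulr_ge0 ?stratum_weight_ge0 ?invr_ge0. Qed.

Lemma stratum_sizeE f r : (stratum_size f r)%:R = \sum_(i < n) ((f i == r)%:R : R).
Proof. by rewrite natr_sum. Qed.

Lemma jps_meanE f phi : jps_mean f phi = \sum_(i < n) unit_weight f i * phi i.
Proof.
transitivity (\sum_(r < H) \sum_(i < n)
    stratum_weight f r / (stratum_size f r)%:R * (phi i * (f i == r)%:R)).
  apply: eq_bigr => r _; rewrite -big_distrr /= /stratum_mean /stratum_weight.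
  by case: ifP => _; rewrite ?mulrA ?mul0r.
rewrite exchange_big /=; apply: eq_bigr => i _.
rewrite (bigD1 (f i)) //= eqxx mulr1 big1 ?addr0 /unit_weight ?mulrA //.
by move=> r /negbTE fir; rewrite eq_sym fir !mulr0.
Qed.

Lemma jps_mean_rank f (g : 'I_H -> R) :
  jps_mean f (fun i => g (f i)) = \sum_(r < H) stratum_weight f r * g r.
Proof.
apply: eq_bigr => r _; rewrite /stratum_mean /stratum_weight.
case: ifP => [N_gt0|]; last by rewrite !mul0r.
congr (_ * _); rewrite (eq_bigr (fun i => g r * (f i == r)%:R)); last first.
  by move=> i _; case: eqP => [->|]; rewrite ?mulr0.
by rewrite -big_distrr /= -stratum_sizeE mulrCA mulVf ?mulr1 // pnatr_eq0 -lt0n.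
Qed.

Lemma sum_stratum_weight f : (0 < n)%N -> \sum_(r < H) stratum_weight f r = 1.
Proof.
move=> n_gt0; have i0 : 'I_n := Ordinal n_gt0.
have d_gt0 : (0 < nstrata f)%N.
  by rewrite /nstrata (bigD1 (f i0)) //= /stratum_size (bigD1 i0) //= eqxx.
rewrite (eq_bigr (fun r => (0 < stratum_size f r)%N%:R * (nstrata f)%:R^-1)).
  by rewrite -big_distrl /= -natr_sum mulfV // pnatr_eq0 -lt0n.
by move=> r _; rewrite /stratum_weight; case: ifP; rewrite ?mul1r ?mul0r.
Qed.

Lemma sum_unit_weight f : (0 < n)%N -> \sum_(i < n) unit_weight f i = 1.
Proof.
move=> n_gt0; rewrite -(sum_stratum_weight f n_gt0).
transitivity (jps_mean f (fun _ => 1)).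
  by rewrite jps_meanE; under [RHS]eq_bigr do rewrite mulr1.
by rewrite (jps_mean_rank f (fun _ => 1)); under eq_bigr do rewrite mulr1.
Qed.

Lemma jps_mean_ge0 f phi : (forall i, 0 <= phi i) -> 0 <= jps_mean f phi.
Proof.
by move=> phi_ge0; rewrite jps_meanE sumr_ge0 // => i _; rewrite mulr_ge0 ?unit_weight_ge0.
Qed.

Lemma ler_jps_mean f phi psi :
  (forall i, phi i <= psi i) -> jps_mean f phi <= jps_mean f psi.
Proof.
by move=> le_phi; rewrite !jps_meanE ler_sum // => i _; rewrite ler_wpM2l ?unit_weight_ge0.
Qed.

Lemma jps_mean_affine f phi a b : (0 < n)%N ->
  jps_mean f (fun i => a * phi i + b) = a * jps_mean f phi + b.
Proof.
move=> n_gt0; rewrite !jps_meanE.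
under eq_bigr do rewrite mulrDr mulrCA.
by rewrite big_split /= -big_distrr -big_distrl /= sum_unit_weight // mul1r.
Qed.

Lemma jps_mean_cst f b : (0 < n)%N -> jps_mean f (fun _ => b) = b.
Proof.
move=> n_gt0; have := jps_mean_affine f (fun _ => 0) 0 b n_gt0.
by rewrite !mul0r !add0r.
Qed.

End jps_mean.

Section rank_symmetry.
Variables (R : numFieldType) (H n : nat).
Implicit Types (f : {ffun 'I_n -> 'I_H}) (r : 'I_H).

Lemma stratum_weight_perm (s : {perm 'I_H}) f r :
  stratum_weight R [ffun i => s (f i)] (s r) = stratum_weight R f r.
Proof.
have size_perm r' : stratum_size [ffun i => s (f i)] (s r') = stratum_size f r'.
  by apply: eq_bigr => i _; rewrite ffunE (inj_eq perm_inj).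
have nstrata_perm : nstrata [ffun i => s (f i)] = nstrata f.
  rewrite /nstrata (reindex_inj (@perm_inj _ s)) /=.
  by apply: eq_bigr => r' _; rewrite size_perm.
by rewrite /stratum_weight size_perm nstrata_perm.
Qed.

Lemma sum_stratum_weight_profiles r : (0 < n)%N ->
  \sum_(f : {ffun 'I_n -> 'I_H}) stratum_weight R f r = (H ^ n.-1)%:R.
Proof.
move=> n_gt0; have H_gt0 : (0 < H)%N by apply: leq_ltn_trans (ltn_ord r).
pose S r' := \sum_(f : {ffun 'I_n -> 'I_H}) stratum_weight R f r'.
have sym r' : S r' = S r.
  have swapK : involutive (fun f => [ffun i => tperm r r' (f i)] : {ffun 'I_n -> 'I_H}).
    by move=> f; apply/ffunP => i; rewrite !ffunE tpermK.
  rewrite /S (reindex_inj (inv_inj swapK)) /=; apply: eq_bigr => f _.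
  by have := stratum_weight_perm (tperm r r') f r; rewrite tpermL.
have : \sum_(r' < H) S r' = (H ^ n)%:R.
  rewrite /S exchange_big /= (eq_bigr (fun _ => 1)) => [|f _]; last exact: sum_stratum_weight.
  by rewrite sumr_const card_ffun !card_ord.
rewrite (eq_bigr _ (fun r' _ => sym r')) sumr_const card_ord -[S r *+ H]mulr_natl.
rewrite -[in (H ^ n)%N](prednK n_gt0) expnS natrM; apply: mulfI.
by rewrite pnatr_eq0 -lt0n.
Qed.

Lemma sum_jps_mean_rank (g : 'I_H -> R) : (0 < n)%N ->
  \sum_(f : {ffun 'I_n -> 'I_H}) jps_mean f (fun i => g (f i)) =
  (H ^ n.-1)%:R * \sum_(r < H) g r.
Proof.
move=> n_gt0; under eq_bigr => f _ do rewrite jps_mean_rank.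
rewrite exchange_big big_distrr /=; apply: eq_bigr => r _.
by rewrite -big_distrl /= sum_stratum_weight_profiles // mulrC.
Qed.

Lemma sum_ffun_app (i0 : 'I_n) (g : 'I_H -> R) :
  \sum_(f : {ffun 'I_n -> 'I_H}) g (f i0) = (H ^ n.-1)%:R * \sum_(r < H) g r.
Proof.
transitivity (\prod_(i < n) \sum_(r < H) if i == i0 then g r else 1).
  rewrite bigA_distr_bigA /=; apply: eq_bigr => f _.
  by rewrite (bigD1 i0) //= eqxx big1 ?mulr1 // => i /negbTE ->.
rewrite (bigD1 i0) //= eqxx mulrC; congr (_ * _).
rewrite (eq_bigr (fun _ => H%:R)) => [|i /negbTE ->]; last by rewrite sumr_const card_ord.
by rewrite prodr_const cardC1 card_ord natrX.
Qed.

End rank_symmetry.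

Section cdf.
Variable R : realType.
Implicit Types (G : R -> R) (x t : R).

Lemma isCDF_ge0 G x : isCDF G -> 0 <= G x.
Proof.
case=> G_nd _ G_ninfty _.
rewrite -(cvg_lim _ G_ninfty) //; apply: limr_le; first exact: cvgP G_ninfty.
by near=> y; apply: G_nd; near: y; exact: nbhs_ninfty_le (num_real _).
Unshelve. all: by end_near. Qed.

Lemma isCDF_le1 G x : isCDF G -> G x <= 1.
Proof.
case=> G_nd _ _ G_pinfty.
rewrite -(cvg_lim _ G_pinfty) //; apply: limr_ge; first exact: cvgP G_pinfty.
by near=> y; apply: G_nd; near: y; exact: nbhs_pinfty_ge (num_real _).
Unshelve. all: by end_near. Qed.

Lemma estep_isCDF : isCDF (@estep R).
Proof.
split.
- move=> x y le_xy; rewrite /estep; case: ifP => [x_ge0|]; last by case: ifP.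
  by rewrite (le_trans x_ge0 le_xy).
- move=> x; have [x_ge0|x_lt0] := leP 0 x; apply: cvg_near_cst; near=> y.
    have lt_xy : x < y by near: y; exact: nbhs_right_gt.
    by rewrite /estep x_ge0 (le_trans x_ge0 (ltW lt_xy)).
  have y_lt0 : y < 0 by near: y; exact: nbhs_right_lt.
  by rewrite /estep (lt_geF x_lt0) (lt_geF y_lt0).
- apply: cvg_near_cst; near=> y.
  have y_lt0 : y < 0 by near: y; exact: nbhs_ninfty_lt (num_real _).
  by rewrite /estep lt_geF.
- apply: cvg_near_cst; near=> y.
  have y_gt0 : 0 < y by near: y; exact: nbhs_pinfty_gt (num_real _).
  by rewrite /estep ltW.
Unshelve. all: by end_near. Qed.

Lemma estep_continuous x : x != 0 -> {for x, continuous (@estep R)}.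
Proof.
move=> x_neq0.
have [x_lt0|x_gt0|x_eq0] := ltgtP x 0; last by rewrite x_eq0 eqxx in x_neq0.
all: apply: cvg_near_cst; near=> y.
- have y_lt0 : y < 0 by near: y; exact: lt_nbhsl x_lt0.
  by rewrite /estep (lt_geF x_lt0) (lt_geF y_lt0).
- have y_gt0 : 0 < y by near: y; exact: lt_nbhsr x_gt0.
  by rewrite /estep (ltW x_gt0) (ltW y_gt0).
Unshelve. all: by end_near. Qed.

Lemma cdf_step_sandwich G x t del : isCDF G -> 0 < del ->
  G del * (x <= t - del)%R%:R <= G (t - x) <= (x <= t + del)%R%:R + G (- del).
Proof.
move=> G_cdf del_gt0; have [G_nd _ _ _] := G_cdf.
apply/andP; split.
  have [le_x|_] := boolP (x <= t - del); last by rewrite mulr0 isCDF_ge0.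
  by rewrite mulr1 G_nd // lerBrDr addrC -lerBrDr.
have [le_x|lt_x] := boolP (x <= t + del).
  by rewrite -[G _]addr0 lerD ?isCDF_ge0 ?isCDF_le1.
by rewrite add0r G_nd // lerBlDr addrC -lerBlDr opprK ltW // ltNge.
Qed.

End cdf.

Definition profile (T : Type) (H n : nat) (Rk : 'I_n -> T -> 'I_H) (w : T) :
  {ffun 'I_n -> 'I_H} := [ffun i => Rk i w].

Lemma Fjps_profile (R : realType) (T : Type) (H n : nat) (K : R -> R)
    (X : 'I_n -> T -> R) (Rk : 'I_n -> T -> 'I_H) t w :
  Fjps K X Rk t w = jps_mean (profile Rk w) (fun i => K (t - X i w)).
Proof.
have size_profile r : Ncount Rk w r = stratum_size (profile Rk w) r.
  by apply: eq_bigr => i _; rewrite ffunE.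
have nstrata_profile : dcount Rk w = nstrata (profile Rk w).
  by apply: eq_bigr => r _; rewrite size_profile.
apply: eq_bigr => r _.
rewrite /Wjps /stratum_weight /Fstratum /stratum_mean size_profile nstrata_profile.
by case: ifP => // _; congr (_ * (_ * _)); apply: eq_bigr => i _; rewrite ffunE.
Qed.

Lemma profile_indicE (R : pzRingType) (T : Type) (H n : nat) (Rk : 'I_n -> T -> 'I_H)
    (G : {ffun 'I_n -> 'I_H} -> T -> R) w :
  G (profile Rk w) w = \sum_f \1_(profile Rk @^-1` [set f]) w * G f w.
Proof.
rewrite (bigD1 (profile Rk w)) //= indicE mem_set // mul1r big1 ?addr0 // => f f_neq.
by rewrite indicE memNset ?mul0r //= => f_eq; rewrite f_eq eqxx in f_neq.
Qed.

Lemma jps_mean_step_indicE (R : realType) (T : Type) (H n : nat)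
    (X : 'I_n -> T -> R) (Rk : 'I_n -> T -> 'I_H) a s w :
  a * jps_mean (profile Rk w) (fun i => (X i w <= s)%R%:R) =
  \sum_(k : {ffun 'I_n -> 'I_H} * 'I_n) a * unit_weight R k.1 k.2 *
    \1_(profile Rk @^-1` [set k.1] `&` [set w | X k.2 w <= s]) w.
Proof.
rewrite (profile_indicE Rk (fun (f : {ffun 'I_n -> 'I_H}) w =>
  a * jps_mean f (fun i => (X i w <= s)%R%:R))).
rewrite -(pair_bigA _ (fun f i => a * unit_weight R f i *
  \1_(profile Rk @^-1` [set f] `&` [set w | X i w <= s]) w)) /=.
apply: eq_bigr => f _; rewrite jps_meanE !big_distrr /=; apply: eq_bigr => i _.
rewrite indicI /=.
have -> : \1_[set w | X i w <= s] w = (X i w <= s)%R%:R :> R by rewrite indicE mem_setE.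
ring.
Qed.

Section expectation_sum_indic.
Variables (R : realType) (d : measure_display) (T : measurableType d).
Variables (P : probability T R) (I : finType) (c : I -> R) (A : I -> set T) (b : R).
Hypotheses (c_ge0 : forall k, 0 <= c k) (mA : forall k, measurable (A k)) (b_ge0 : 0 <= b).

Lemma expectation_sum_indic :
  ('E_P[fun w => (\sum_k c k * \1_(A k) w + b)%R] =
   \sum_k (c k)%:E * P (A k) + b%:E)%E.
Proof.
have cA_ge0 k w : 0 <= c k * \1_(A k) w by rewrite mulr_ge0 ?indic_ge0.
have mcA k : measurable_fun setT (fun w => c k * \1_(A k) w).
  apply: measurable_realfun.measurable_funM; first exact: measurable_cst.
  exact: measurable_realfun.measurable_indic.
rewrite unlock; under eq_integral do rewrite EFinD -sumEFin.
rewrite ge0_integralD //; last 2 first.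
- by move=> w _; rewrite sume_ge0 // => k _; rewrite lee_fin.
- apply: emeasurable_sum => k; exact/measurable_realfun.measurable_EFinP.
rewrite integral_cst //.
have -> : (b%:E * P [set: T] = b%:E)%E by rewrite probability_setT mule1.
rewrite ge0_integral_sum //; last 2 first.
- move=> k; exact/measurable_realfun.measurable_EFinP.
- by move=> k w _; rewrite lee_fin.
congr (_ + _)%E; apply: eq_bigr => k _.
rewrite (integralZl_indic _ (fun _ => A k)) //; last by rewrite ltNge c_ge0.
by rewrite integral_indic // setIT.
Qed.

End expectation_sum_indic.

Section jps_sample.
Variables (R : realType) (d : measure_display) (T : measurableType d).
Variables (P : probability T R) (H n : nat) (Fr : 'I_H -> R -> R).
Variables (X : 'I_n -> T -> R) (Rk : 'I_n -> T -> 'I_H).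
Hypotheses (jps : JPS_sample P Fr X Rk) (Fr_cdf : forall r, isCDF (Fr r)).

Lemma measurable_sample_le i x : measurable [set w | X i w <= x].
Proof.
have [mX _ _ _] := jps; have := mX i measurableT _ (measurable_itv `]-oo, x]).
by rewrite setTI; congr measurable; apply/seteqP; split => w /=; rewrite in_itv.
Qed.

Lemma measurable_profile_preimage f : measurable (profile Rk @^-1` [set f]).
Proof.
have [_ mRk _ _] := jps.
have -> : profile Rk @^-1` [set f] = \bigcap_(j in [set: 'I_n]) [set w | Rk j w = f j].
  apply/seteqP; split => w /=.
    by move=> <- j _; rewrite ffunE.
  by move=> Rk_f; apply/ffunP => j; rewrite ffunE Rk_f.
by apply: fin_bigcap_measurable => //; exact: finite_finset.
Qed.

Lemma P_rank i r : P [set w | Rk i w = r] = (H%:R^-1)%:E.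
Proof.
have [_ mRk PRX _] := jps.
pose A k := [set w | Rk i w = r] `&` [set w | X i w <= k%:R].
have mA k : measurable (A k) by apply: measurableI => //; exact: measurable_sample_le.
have UA : \bigcup_k A k = [set w | Rk i w = r].
  apply/seteqP; split => w /=; first by case=> k _ [].
  move=> Rk_r; exists (Num.Def.archi_bound (X i w)) => //; split => //.
  exact/ltW/unstable.ltr_bound.
have A_nd : nondecreasing_seq A.
  move=> k m le_km; apply/subsetPset => w [Rk_r le_X]; split => //.
  by apply: le_trans le_X _; rewrite ler_nat.
have := @nondecreasing_cvg_mu _ _ R P _ mA; rewrite UA => /(_ (mRk i r) A_nd) PA_cvg.
have PA_lim : P \o A @ \oo --> (H%:R^-1 * 1)%:E.
  have -> : P \o A = fun k => (H%:R^-1 * Fr r k%:R)%:E by apply/funext => k; exact: PRX.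
  apply/cvg_EFin; first exact: nearW.
  apply: cvgM; first exact: cvg_cst.
  by have [_ _ _ Fr_pinfty] := Fr_cdf r; exact: cvg_comp cvgr_idn Fr_pinfty.
by rewrite mulr1 in PA_lim; exact: cvg_unique _ PA_cvg PA_lim.
Qed.

Lemma P_profile_le f i s :
  P (profile Rk @^-1` [set f] `&` [set w | X i w <= s]) = (H%:R^-1 ^+ n * Fr (f i) s)%:E.
Proof.
have [mX _ PRX Pind] := jps.
pose B j : set R := if j == i then `]-oo, s]%classic else setT.
have -> : profile Rk @^-1` [set f] `&` [set w | X i w <= s] =
    \bigcap_(j in [set: 'I_n]) [set w | B j (X j w) /\ [set f j] (Rk j w)].
  apply/seteqP; split => w /=.
    case=> <- le_X j _; rewrite /B ffunE; split => //.
    by case: eqP => [->|_]; rewrite ?in_itv.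
  move=> Bw; split; first by apply/ffunP => j; rewrite ffunE; have [] := Bw j I.
  by have [] := Bw i I; rewrite /B eqxx /= in_itv.
rewrite (Pind B (fun j => [set f j])) => [|j]; last by rewrite /B; case: eqP.
rewrite (bigD1 i) //= (eq_bigr (fun => (H%:R^-1)%:E)) => [|j /negbTE j_neq]; last first.
  rewrite -(P_rank j (f j)) /B j_neq; congr (P _).
  by apply/seteqP; split => w /= => [[]|] //.
have -> : P [set w | B i (X i w) /\ Rk i w = f i] = (H%:R^-1 * Fr (f i) s)%:E.
  rewrite -(PRX i) /B eqxx; congr (P _).
  by apply/seteqP; split => w /=; rewrite in_itv /= => -[].
rewrite prodEFin prodr_const cardC1 card_ord -EFinM mulrAC -exprS.
by rewrite prednK // (leq_ltn_trans _ (ltn_ord i)).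
Qed.

Lemma measurable_jps_mean (phi : 'I_n -> T -> R) :
  (forall i, measurable_fun setT (phi i)) ->
  measurable_fun setT (fun w => jps_mean (profile Rk w) (fun i => phi i w)).
Proof.
move=> mphi; rewrite (funext (profile_indicE Rk (fun (f : {ffun 'I_n -> 'I_H}) w => jps_mean f (fun i => phi i w)))).
apply: measurable_sum => f; apply: measurable_realfun.measurable_funM.
  exact/measurable_realfun.measurable_indic/measurable_profile_preimage.
under eq_fun do rewrite jps_meanE.
by apply: measurable_sum => i; apply: measurable_realfun.measurable_funM.
Qed.

Lemma expectation_jps_step a b s : 0 <= a -> 0 <= b -> (0 < n)%N ->
  ('E_P[fun w => (a * jps_mean (profile Rk w) (fun i => (X i w <= s)%R%:R) + b)%R] =
   (a * (H%:R^-1 * \sum_(r < H) Fr r s) + b)%:E)%E.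
Proof.
move=> a_ge0 b_ge0 n_gt0.
under eq_fun do rewrite jps_mean_step_indicE.
rewrite expectation_sum_indic //; first last.
- move=> k; apply: measurableI; first exact: measurable_profile_preimage.
  exact: measurable_sample_le.
- by move=> k; rewrite mulr_ge0 ?unit_weight_ge0.
under eq_bigr do rewrite P_profile_le -EFinM.
rewrite sumEFin -EFinD; congr (_ + _)%:E.
rewrite -(pair_bigA _ (fun f i => a * unit_weight R f i * (H%:R^-1 ^+ n * Fr (f i) s))) /=.
transitivity (a * H%:R^-1 ^+ n *
    \sum_(f : {ffun 'I_n -> 'I_H}) jps_mean f (fun i => Fr (f i) s)).
  rewrite big_distrr /=; apply: eq_bigr => f _; rewrite jps_meanE big_distrr /=.
  by apply: eq_bigr => i _; rewrite mulrACA mulrC.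
rewrite (sum_jps_mean_rank (fun r => Fr r s)) //; have [H0|H_gt0] := posnP H.
  have -> : \sum_(r < H) Fr r s = 0 by apply: big1 => -[r r_lt] _; exfalso; rewrite H0 in r_lt.
  by rewrite !mulr0.
rewrite -[in H%:R^-1 ^+ n](prednK n_gt0) exprS natrX -!mulrA; congr (_ * (_ * _)).
by rewrite mulrA -exprMn mulVf ?expr1n ?mul1r // pnatr_eq0 -lt0n.
Qed.

Lemma measurable_jps_step (a b s : R) : measurable_fun setT
  (fun w => a * jps_mean (profile Rk w) (fun i => (X i w <= s)%R%:R) + b).
Proof.
apply: measurable_realfun.measurable_funD => //.
apply: measurable_realfun.measurable_funM => //.
apply: measurable_jps_mean => i.
rewrite (_ : (fun w => _) = \1_[set w | X i w <= s]); last first.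
  by apply/funext => w; rewrite indicE mem_setE.
exact/measurable_realfun.measurable_indic/measurable_sample_le.
Qed.

Variable K : R -> R.
Hypothesis K_cdf : isCDF K.

Lemma measurable_Fjps t : measurable_fun setT (Fjps K X Rk t).
Proof.
rewrite (funext (Fjps_profile K X Rk t)).
apply: measurable_jps_mean => i.
apply: (measurableT_comp (f := K) (g := fun w => t - X i w)).
  by apply: measurable_realfun.nondecreasing_measurable => //; case: K_cdf.
apply: measurable_realfun.measurable_funB => //; by case: jps.
Qed.

Lemma Fjps_ge0 t w : 0 <= Fjps K X Rk t w.
Proof. by rewrite Fjps_profile; apply: jps_mean_ge0 => i; exact: isCDF_ge0 _ K_cdf. Qed.

Lemma expectation_Fjps_ge t del : (0 < n)%N -> 0 < del ->
  ((K del * (H%:R^-1 * \sum_(r < H) Fr r (t - del)))%:E <= 'E_P[Fjps K X Rk t])%E.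
Proof.
move=> n_gt0 del_gt0; have K_ge0 := isCDF_ge0 del K_cdf.
rewrite -[X in (X%:E <= _)%E]addr0 -expectation_jps_step //.
apply: expectation_le => //; first exact: measurable_jps_step.
- exact: measurable_Fjps.
- by move=> w; rewrite addr0 mulr_ge0 // jps_mean_ge0.
- exact: Fjps_ge0.
apply: aeW => w; rewrite Fjps_profile -jps_mean_affine //; apply: ler_jps_mean => i.
by rewrite addr0; have /andP[] := cdf_step_sandwich (X i w) t K_cdf del_gt0.
Qed.

Lemma expectation_Fjps_le t del : (0 < n)%N -> 0 < del ->
  ('E_P[Fjps K X Rk t] <= (H%:R^-1 * \sum_(r < H) Fr r (t + del) + K (- del))%:E)%E.
Proof.
move=> n_gt0 del_gt0; have K_ge0 := isCDF_ge0 (- del) K_cdf.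
rewrite -[X in (_ <= (X + _)%:E)%E]mul1r -expectation_jps_step //.
apply: expectation_le => //; first exact: measurable_Fjps.
- exact: measurable_jps_step.
- exact: Fjps_ge0.
- by move=> w; rewrite addr_ge0 // mul1r jps_mean_ge0.
apply: aeW => w; rewrite Fjps_profile -jps_mean_affine //; apply: ler_jps_mean => i.
by rewrite mul1r; have /andP[] := cdf_step_sandwich (X i w) t K_cdf del_gt0.
Qed.

End jps_sample.

Lemma cvg_kernel_sandwich (R : realType) (K : nat -> R -> R) (G : R -> R) (u : nat -> R) t :
  {for t, continuous G} -> (forall x, G x <= 1) -> (forall n x, K n x <= 1) ->
  (forall x, x != 0 -> K n x @[n --> \oo] --> estep x) ->
  (forall del, 0 < del -> \forall n \near \oo,
    K n del * G (t - del) <= u n <= G (t + del) + K n (- del)) ->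
  u n @[n --> \oo] --> G t.
Proof.
move=> G_t G_le1 K_le1 K_cvg u_bnd; apply/cvgrPdist_lt => e e_gt0.
have e2_gt0 : 0 < e / 2 by rewrite divr_gt0.
move/cvgrPdist_lt: G_t => /(_ _ e2_gt0) /nbhs_ballP [del /= del_gt0 G_ball].
have dl_gt0 : 0 < del / 2 by rewrite divr_gt0.
have dl_lt : del / 2 < del by rewrite ltr_pdivrMr // ltr_pMr // ltr1n.
have G_lo : `|G t - G (t - del / 2)| < e / 2.
  by apply: G_ball; rewrite -ball_normE /ball_ /= opprB addrC subrK gtr0_norm.
have G_hi : `|G t - G (t + del / 2)| < e / 2.
  by apply: G_ball; rewrite -ball_normE /ball_ /= opprD addNKr normrN gtr0_norm.
have := K_cvg _ (lt0r_neq0 dl_gt0); rewrite /estep ltW //.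
move=> /cvgrPdist_lt /(_ _ e2_gt0) K_right.
have := K_cvg (- (del / 2)); rewrite oppr_eq0 (gt_eqF dl_gt0) /estep oppr_ge0 leNgt dl_gt0.
move=> /(_ isT) /cvgrPdist_lt /(_ _ e2_gt0) K_left.
near=> n.
have /andP[u_lo u_hi] : K n (del / 2) * G (t - del / 2) <= u n <= G (t + del / 2) + K n (- (del / 2)).
  by near: n; exact: u_bnd.
have K1 : `|1 - K n (del / 2)| < e / 2 by near: n.
have K0 : `|0 - K n (- (del / 2))| < e / 2 by near: n.
have KG : (1 - K n (del / 2)) * G (t - del / 2) <= 1 - K n (del / 2).
  by rewrite ler_piMr // subr_ge0.
move: K1 K0 G_lo G_hi KG; rewrite !ltr_distlC => /andP[? ?] /andP[? ?] /andP[? ?] /andP[? ?].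
rewrite mulrBl mul1r => ?; apply/andP; split; lra.
Unshelve. all: by end_near. Qed.

Lemma weak_conv_jps_unbiased (R : realType) (H : nat) (K : nat -> R -> R) :
  (forall n, isCDF (K n)) -> weak_conv K (@estep R) -> jps_asymptotically_unbiased H K.
Proof.
move=> K_cdf K_weak F Fr F_cdf Fr_cdf F_avg d T P X Rk jps t F_t.
pose E n := ('E_(P n)[Fjps (K n) (X n) (Rk n) t])%E.
have E_ge n del : (0 < n)%N -> 0 < del -> ((K n del * F (t - del))%:E <= E n)%E.
  by rewrite F_avg; exact: expectation_Fjps_ge.
have E_le n del : (0 < n)%N -> 0 < del -> (E n <= (F (t + del) + K n (- del))%:E)%E.
  by rewrite F_avg; exact: expectation_Fjps_le.
have E_fin : \forall n \near \oo, E n \is a fin_num.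
  near=> n; have n_gt0 : (0 < n)%N by near: n; exists 1%N.
  rewrite fin_numElt (lt_le_trans (ltNyr _) (E_ge n 1 n_gt0 ltr01)).
  by rewrite (le_lt_trans (E_le n 1 n_gt0 ltr01)) ?ltry.
apply/fine_cvgP; split => //.
apply: (cvg_kernel_sandwich (K := K) F_t) => [x|n x|x x_neq0|].
- exact: isCDF_le1.
- exact: isCDF_le1.
- exact/K_weak/estep_continuous.
move=> del del_gt0; near=> n; have n_gt0 : (0 < n)%N by near: n; exists 1%N.
have E_n : E n = (fine (E n))%:E by rewrite fineK //; near: n.
by rewrite -!lee_fin -E_n E_ge ?E_le.
Unshelve. all: by end_near. Qed.

Definition rank_profiles (n m : nat) : Type := {ffun 'I_n -> 'I_m.+1}.
HB.instance Definition _ n m := Finite.on (rank_profiles n m).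
HB.instance Definition _ n m := isPointed.Build (rank_profiles n m) [ffun => ord0].
HB.instance Definition _ n m := @isMeasurable.Build default_measure_display
  (rank_profiles n m) discrete_measurable
  discrete_measurable0 discrete_measurableC discrete_measurableU.

Section uniform_profile.
Variables (R : realType) (n m : nat).
Local Open Scope ereal_scope.

Let profile_mass_ge0 : (0 <= (m.+1%:R : R)^-1 ^+ n)%R.
Proof. by rewrite exprn_ge0 // invr_ge0. Qed.

Definition profile_mass : {nonneg R} := NngNum profile_mass_ge0.

Definition uniform_profile (A : set (rank_profiles n m)) : \bar R :=
  \sum_(f : rank_profiles n m) mscale profile_mass \d_f A.

Let uniform_profile0 : uniform_profile set0 = 0.
Proof. by rewrite /uniform_profile big1 // => f _; rewrite measure0. Qed.

Let uniform_profile_ge0 A : 0 <= uniform_profile A.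
Proof. by apply: sume_ge0 => f _; exact: measure_ge0. Qed.

Let uniform_profile_sigma_additive : semi_sigma_additive uniform_profile.
Proof.
move=> F mF tF mUF; rewrite [X in _ --> X](_ : _ =
    lim ((fun k => \sum_(0 <= i < k) uniform_profile (F i)) @ \oo)).
  by apply: is_cvg_ereal_nneg_natsum => k _; exact: uniform_profile_ge0.
rewrite nneseries_sum //; apply: eq_bigr => f _; exact: measure_semi_bigcup.
Qed.

HB.instance Definition _ := isMeasure.Build _ _ _ uniform_profile
  uniform_profile0 uniform_profile_ge0 uniform_profile_sigma_additive.

Lemma uniform_profileE A :
  uniform_profile A = (profile_mass%:num * \sum_(f : rank_profiles n m) \1_A f)%:E.
Proof.
rewrite /uniform_profile big_distrr /= -sumEFin; apply: eq_bigr => f _.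
by rewrite /mscale /= diracE indicE EFinM.
Qed.

Let uniform_profile_setT : uniform_profile setT = 1.
Proof.
rewrite uniform_profileE (eq_bigr (fun => 1%R)) => [|f _]; last by rewrite indicE in_setT.
by rewrite sumr_const card_ffun !card_ord /= natrX -exprMn mulVf ?expr1n.
Qed.

HB.instance Definition _ :=
  Measure_isProbability.Build _ _ _ uniform_profile uniform_profile_setT.

End uniform_profile.

Lemma JPS_uniform_profile (R : realType) (n m : nat) :
  JPS_sample (@uniform_profile R n m : probability _ R) (fun _ => @estep R)
    (fun _ _ => 0) (fun i (f : rank_profiles n m) => f i).
Proof.
have PE A : (@uniform_profile R n m : probability _ R) A =
    ((m.+1%:R^-1 ^+ n) * \sum_(f : rank_profiles n m) \1_A f)%:E.
  exact: uniform_profileE.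
have mass_app (i0 : 'I_n) : (m.+1%:R^-1 ^+ n * (m.+1 ^ n.-1)%:R = m.+1%:R^-1 :> R)%R.
  rewrite natrX -[in X in X * _](prednK (leq_ltn_trans (leq0n _) (ltn_ord i0))).
  by rewrite exprS -mulrA -exprMn mulVf ?expr1n ?mulr1.
split => //.
- move=> i r x; rewrite PE.
  rewrite (eq_bigr (fun f : rank_profiles n m => (f i == r)%:R * estep x)%R); last first.
    move=> f _; rewrite indicE; have [<-|fi_neq] := eqP.
      by rewrite mul1r /estep; case: ifP => x_ge0; [rewrite mem_set | rewrite memNset // => -[]].
    by rewrite mul0r memNset // => -[].
  rewrite (sum_ffun_app i (fun r' => (r' == r)%:R * estep x)%R) mulrA (mass_app i).
  by rewrite (bigD1 r) //= eqxx mul1r big1 ?addr0 // => r' /negbTE ->; rewrite mul0r.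
- move=> B S _.
  pose g i r : R := `[< B i 0 /\ S i r >]%:R.
  have P_i i : (@uniform_profile R n m : probability _ R) [set f | B i 0 /\ S i (f i)] =
      (m.+1%:R^-1 * \sum_(r < m.+1) g i r)%:E.
    rewrite PE (eq_bigr (fun f : rank_profiles n m => g i (f i))) //.
    by rewrite sum_ffun_app mulrA (mass_app i).
  rewrite (eq_bigr _ (fun i _ => P_i i)) prodEFin PE; congr _%:E.
  rewrite big_split /= prodr_const card_ord bigA_distr_bigA /=; congr (_ * _)%R.
  apply: eq_bigr => f _; rewrite indicE /g.
  have [Bf|nBf] := pselect (forall i, B i 0 /\ S i (f i)).
    by rewrite mem_set => [|i _]; [rewrite big1 // => i _; rewrite asboolT | exact: Bf].
  rewrite memNset => [|Bf]; last by apply: nBf => i; exact: Bf i I.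
  have [i nBfi] : exists i, ~ (B i 0 /\ S i (f i)) by apply/existsNP.
  by rewrite (bigD1 i) //= asboolF // mul0r.
Qed.

Lemma jps_unbiased_weak_conv (R : realType) (H : nat) (K : nat -> R -> R) :
  (0 < H)%N -> (forall n, isCDF (K n)) -> jps_asymptotically_unbiased H K ->
  weak_conv K (@estep R).
Proof.
case: H => // m _ K_cdf K_unbiased t estep_t.
have estep_avg x : estep x = (m.+1%:R^-1 * \sum_(r < m.+1) estep x :> R).
  by rewrite sumr_const card_ord -[estep x *+ _]mulr_natl mulrA mulVf ?mul1r.
have := K_unbiased _ _ (estep_isCDF R) (fun _ => estep_isCDF R) estep_avg
  _ _ _ _ _ (fun n => JPS_uniform_profile R n m) t estep_t.
move=> /fine_cvgP [_]; apply: cvg_trans; apply: near_eq_cvg; near=> n.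
have n_gt0 : (0 < n)%N by near: n; exists 1%N.
rewrite /= (_ : Fjps _ _ _ _ = cst (K n t)) ?expectation_cst //.
by apply/funext => f; rewrite Fjps_profile subr0 jps_mean_cst.
Unshelve. all: by end_near. Qed.

Theorem theorem1 (R : realType) (H : nat) (K : nat -> R -> R) :
  (2 <= H)%N -> (forall n, isCDF (K n)) ->
  weak_conv K (@estep R) <-> jps_asymptotically_unbiased H K.
Proof.
move=> H_ge2 K_cdf; split; first exact: weak_conv_jps_unbiased.
by apply: jps_unbiased_weak_conv => //; exact: ltnW H_ge2.
Qed.
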